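(* Let $s\geq 2$ and let $n_1>n_2>\cdots>n_s\geq 2$ be integers. Let $X_{n_1,\ldots,n_s}$ be the set of vectors of length $s+1$ consisting of: the vector $(n_1,n_2,\ldots,n_s,1)$; the set $X_s^s=\{(j,\ldots,j,0),(j,\ldots,j,1): j\in\{1,\ldots,n_s\}\}$, where $j$ is repeated in the first $s$ coordinates; and, for each $i\in\{2,\ldots,s\}$, the set $X_{i-1}^s$ of vectors $(\underbrace{n_i+k,\ldots,n_i+k}_{i-1},\underbrace{1,\ldots,1}_{s-i+1},0)$ and $(\underbrace{n_i+k,\ldots,n_i+k}_{i-1},n_i,n_{i+1},\ldots,n_s,1)$ for $k\in\{0,1,\ldots,n_{i-1}-n_i-1\}$. Let $\mathcal B_{n_1,\ldots,n_s}$ consist of all $3$-element subsets $\{\alpha_1,\alpha_2,\alpha_3\}\subseteq X_{n_1,\ldots,n_s}$ such that for every coordinate $j\in\{1,\ldots,s+1\}$ the set $\{\alpha_{1(j)},\alpha_{2(j)},\alpha_{3(j)}\}$ has exactly $2$ elements, together with the additional triple $\{(1,\ldots,1,1,0),(n_s,\ldots,n_s,1,0),(n_s,\ldots,n_s,n_s,0)\}$ (here the first vector has its first $s$ entries equal to $1$; the second has its first $s-1$ entries equal to $n_s$ and $s$-th entry $1$; the third has its first $s$ entries equal to $n_s$; all three have last entry $0$). Then the $3$-uniform bi-hypergraph $\mathcal H_{n_1,\ldots,n_s}=(X_{n_1,\ldots,n_s},\mathcal B_{n_1,\ldots,n_s})$ is a one-realization of $\{n_1,n_2,\ldots,n_s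\}$.
   Context: A bi-hypergraph $(X,\mathcal B)$ is a mixed hypergraph whose $\mathcal C$-edges and $\mathcal D$-edges both equal $\mathcal B$. A strict $k$-coloring is a partition of $X$ into exactly $k$ nonempty classes such that every edge of $\mathcal B$ contains two vertices of a common class and two vertices of distinct classes. The feasible set is the set of $k$ admitting a strict $k$-coloring; the chromatic spectrum lists, for $k=1,\ldots,\max$ of the feasible set, the number of strict $k$-colorings (as partitions). A one-realization of a set $S$ is a mixed hypergraph whose feasible set is $S$ and whose chromatic spectrum has all entries in $\{0,1\}$. $\alpha_{l(j)}$ denotes the $j$-th entry of $\alpha_l$. *)

From mathcomp Require Import all_boot.
Set Implicit Arguments. Unset Strict Implicit. Unset Printing Implicit Defensive.

Section MixedHypergraph.
Variable V : finType.

Definition strict_coloring (C D : {set {set V}}) (P : {set {set V}}) : bool :=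
  [&& partition P [set: V],
      [forall E in C, exists x in E, exists y in E,
          (x != y) && (pblock P x == pblock P y)]
    & [forall E in D, exists x in E, exists y in E, pblock P x != pblock P y]].

Definition n_colorings (C D : {set {set V}}) (k : nat) : nat :=
  #|[set P : {set {set V}} | strict_coloring C D P && (#|P| == k)]|.

Definition feasible (C D : {set {set V}}) (k : nat) : Prop :=
  exists P : {set {set V}}, strict_coloring C D P /\ #|P| = k.

Definition one_realization (C D : {set {set V}}) (S : seq nat) : Prop :=
  (forall k, feasible C D k <-> k \in S) /\ (forall k, n_colorings C D k <= 1).

End MixedHypergraph.

(* ns = [:: n_1; ...; n_s];  n_i = nth 0 ns i.-1  (1-indexed i). *)

Definition nth_n (ns : seq nat) (i : nat) : nat := nth 0 ns i.-1.

Definition Xtop (ns : seq nat) : seq nat := rcons ns 1.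

Definition Xss (s : nat) (ns : seq nat) : seq (seq nat) :=
  flatten [seq [:: rcons (nseq s j) 0; rcons (nseq s j) 1]
          | j <- iota 1 (nth_n ns s)].

(* X_{i-1}^s for 2 <= i <= s *)
Definition Xi (s : nat) (ns : seq nat) (i : nat) : seq (seq nat) :=
  flatten [seq [:: nseq i.-1 (nth_n ns i + k) ++ nseq (s - i + 1) 1 ++ [:: 0];
                   nseq i.-1 (nth_n ns i + k) ++ drop i.-1 ns ++ [:: 1]]
          | k <- iota 0 (nth_n ns i.-1 - nth_n ns i)].

Definition Xset (s : nat) (ns : seq nat) : seq (seq nat) :=
  undup (Xtop ns :: Xss s ns ++ flatten [seq Xi s ns i | i <- iota 2 s.-1]).

Definition vtx (s : nat) (ns : seq nat) : finType := seq_sub (Xset s ns).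

Definition coord_ok (s : nat) (ns : seq nat) (E : {set vtx s ns}) : bool :=
  [forall j : 'I_s.+1, size (undup [seq nth 0 (val v) j | v <- enum E]) == 2].

Definition extra_triple (s : nat) (ns : seq nat) : seq (seq nat) :=
  [:: rcons (nseq s 1) 0;
      nseq s.-1 (nth_n ns s) ++ [:: 1; 0];
      rcons (nseq s (nth_n ns s)) 0].

Definition Bedges (s : nat) (ns : seq nat) : {set {set vtx s ns}} :=
  [set E : {set vtx s ns} |
     ((#|E| == 3) && coord_ok E) ||
     (E == [set v : vtx s ns | val v \in extra_triple s ns])].

From mathcomp Require Import all_boot zify.
Set Implicit Arguments. Unset Strict Implicit. Unset Printing Implicit Defensive.

(* Write N = n_1 and m = n_s.  The vertices are W_x = (min(x,n_1),...,min(x,n_s),1) for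
   1 <= x <= N, U_x (whose j-th entry is x if x < n_j and 1 otherwise, last entry 0) for
   1 <= x < N, and A = (m,...,m,0).  Coloring by the q-th coordinate is strict and uses n_q
   colors.  Conversely, given a strict coloring, let T be the least x such that U_x and W_x
   get different colors (T = N if there is none).  The edges force W_1,...,W_T to have
   distinct colors, W_x the color of W_T for x >= T, U_x the color of W_x for x < T and of
   W_1 otherwise, A the color of W_m, and T to be one of the n_q: this is exactly the coloring
   by the q-th coordinate.  Since the n_q are distinct, there is at most one strict
   k-coloring for each k. *)

Section ExactlyTwo.
Variable K : eqType.

Definition exactly_two (a b c : K) : bool := size (undup [:: a; b; c]) == 2.

Lemma exactly_twoE a b c :
  exactly_two a b c = ((a == b) || (b == c) || (a == c)) && ~~ ((a == b) && (b == c)).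
Proof.
rewrite /exactly_two /= !inE.
by case: (a =P b) => ab; case: (b =P c) => bc; case: (a =P c) => ac /=;
  try congruence.
Qed.

Variables a b c : K.
Hypothesis two : exactly_two a b c.

Lemma exactly_two_eq13 : a != b -> b != c -> a = c.
Proof. by move: two; rewrite exactly_twoE; do 3 case: eqP. Qed.
Lemma exactly_two_eq23 : a != b -> a != c -> b = c.
Proof. by move: two; rewrite exactly_twoE; do 3 case: eqP. Qed.
Lemma exactly_two_eq12 : a != c -> b != c -> a = b.
Proof. by move: two; rewrite exactly_twoE; do 3 case: eqP. Qed.
Lemma exactly_two_eq12_neq23 : a = b -> b != c.
Proof. by move: two; rewrite exactly_twoE => + ab; rewrite ab eqxx; case: eqP. Qed.
Lemma exactly_two_eq12_neq13 : a = b -> a != c.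
Proof. by move: two; rewrite exactly_twoE => + ab; rewrite ab eqxx; case: eqP. Qed.
Lemma exactly_two_eq13_neq12 : a = c -> a != b.
Proof.
by move: two; rewrite exactly_twoE => + ac; rewrite ac eqxx orbT /=; case: eqP => // ->;
  rewrite eqxx.
Qed.
Lemma exactly_two_eq13_neq23 : a = c -> b != c.
Proof.
by move: two; rewrite exactly_twoE => + ac; rewrite ac eqxx orbT /= eq_sym;
  case: eqP => // ->; rewrite eqxx.
Qed.

End ExactlyTwo.

Lemma enum_set3 (T : finType) (a b d : T) : a != b -> b != d -> a != d ->
  perm_eq (enum [set a; b; d]) [:: a; b; d].
Proof.
move=> ab bd ad; apply: uniq_perm; rewrite ?enum_uniq //= ?inE ?negb_or ?ab ?ad ?bd //.
by move=> x; rewrite mem_enum !inE orbA.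
Qed.

Lemma strict_coloring_triple (T : finType) (C D P : {set {set T}}) (a b d : T) :
  strict_coloring C D P -> a != b -> b != d -> a != d ->
  [set a; b; d] \in C -> [set a; b; d] \in D ->
  exactly_two (pblock P a) (pblock P b) (pblock P d).
Proof.
case/and3P => _ /forall_inP sameC /forall_inP diffD ab bd ad EC ED.
have in3 x : x \in [set a; b; d] -> [\/ x = a, x = b | x = d].
  by rewrite !inE => /orP[/orP[]|] /eqP->; [apply: Or31 | apply: Or32 | apply: Or33].
rewrite exactly_twoE; apply/andP; split.
  have /existsP[x /andP[/in3 xE /existsP[y /andP[/in3 yE /andP[xy /eqP pxy]]]]] := sameC _ EC.
  by move: xy pxy; case: xE => ->; case: yE => ->; rewrite ?eqxx //= => _ ->; rewrite ?eqxx ?orbT.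
have /existsP[x /andP[/in3 xE /existsP[y /andP[/in3 yE pxy]]]] := diffD _ ED.
apply/negP => /andP[/eqP pab /eqP pbd]; move: pxy.
by case: xE => ->; case: yE => ->; rewrite ?pab ?pbd eqxx.
Qed.

Section PreimPartition.
Variables (T : finType) (R : eqType) (f : T -> R).
Local Notation P := (preim_partition f [set: T]).

Lemma pblock_preim x y : (pblock P x == pblock P y) = (f x == f y).
Proof.
have /and3P[/eqP cover_P triv_P _] := preim_partitionP f [set: T].
have eqi : {in [set: T] & &, equivalence_rel (fun x y => f x == f y)}.
  by move=> x1 x2 x3 _ _ _; split => //= /eqP ->.
by rewrite eq_pblock // ?cover_P ?inE // (pblock_equivalence_partition eqi) ?inE.
Qed.

Lemma preim_partition_unique (Q : {set {set T}}) : partition Q [set: T] ->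
  (forall x y, (pblock Q x == pblock Q y) = (f x == f y)) -> Q = P.
Proof.
move=> partQ sameQ; rewrite -(preim_partition_pblock partQ).
by apply: eq_imset => x; apply/setP => y; rewrite !inE sameQ.
Qed.

Lemma card_preim_partition n (g : 'I_n -> T) :
  injective (f \o g) -> (forall x, exists i, f x = f (g i)) -> #|P| = n.
Proof.
move=> inj_fg onto.
have /and3P[/eqP cover_P triv_P P0] := preim_partitionP f [set: T].
have -> : P = [set pblock P (g i) | i : 'I_n].
  apply/setP => B; apply/idP/imsetP => [PB|[i _ ->]]; last by rewrite pblock_mem ?cover_P.
  have /set0Pn[x Bx] : B != set0 by apply: contraNneq P0 => <-.
  have [i fx] := onto x; exists i => //.
  by apply/eqP; rewrite -(def_pblock triv_P PB Bx) pblock_preim fx.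
rewrite card_imset ?card_ord // => i j /eqP; rewrite pblock_preim => /eqP.
exact: inj_fg.
Qed.

End PreimPartition.

(* [lia] is much faster once the coloring hypotheses are out of its way. *)
Ltac nat_lia := repeat match goal with
  | H : is_true (exactly_two _ _ _) |- _ => clear H
  | H : forall _, _ |- _ => clear H
  end; lia.

(* [colW x], [colU x] and [colA] stand for the colors of W_x, U_x and A; each hypothesis
   is what a strict coloring says about one family of edges. *)
Section Threshold.
Variables (K : eqType) (colW colU : nat -> K) (colA : K) (N m : nat) (isn : pred nat).
Hypotheses (m_ge2 : 2 <= m) (m_ltN : m < N) (isnN : isn N) (isnm : isn m).
Hypothesis two_WWU : forall x y, 1 <= x < y -> y <= N -> exactly_two (colW x) (colW y) (colU x).
Hypothesis two_W1WU : forall y, 1 < y < N -> exactly_two (colW 1) (colW y) (colU y).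
Hypothesis two_WWUS : forall x, 1 <= x -> x.+1 < N -> ~~ isn x.+1 ->
  exactly_two (colW x) (colW x.+1) (colU x.+1).
Hypothesis two_WUUS : forall x, 1 <= x -> x.+1 < N -> (2 <= x) || (x.+1 < m) ->
  exactly_two (colW x) (colU x) (colU x.+1).
Hypothesis two_WU1U : forall z, 1 < z < N -> exactly_two (colW z) (colU 1) (colU z).
Hypothesis two_W1WmA : exactly_two (colW 1) (colW m) colA.
Hypothesis two_W1U1A : exactly_two (colW 1) (colU 1) colA.
Hypothesis two_WmU1A : exactly_two (colW m) (colU 1) colA.
Hypothesis two_W1UmA : exactly_two (colW 1) (colU m) colA.
Hypothesis two_U1UmA : exactly_two (colU 1) (colU m) colA.

Lemma first_mismatch : exists T, [/\ 1 <= T <= N,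
  forall x, 1 <= x < T -> colU x = colW x & T < N -> colU T != colW T].
Proof.
have exP : exists x, (x == N) || [&& 1 <= x, x < N & colU x != colW x].
  by exists N; rewrite eqxx.
case: (ex_minnP exP) => T HT Tmin; exists T; split.
- have TN : T <= N by apply: Tmin; rewrite eqxx.
  by case/orP: HT => [/eqP->|/and3P[-> _ _]]; rewrite ?TN //; nat_lia.
- move=> x /andP[x1 xT]; apply/eqP; apply: contraTT xT => ne; rewrite -leqNgt.
  case: (ltnP x N) => xN; last by apply: leq_trans (Tmin _ _) xN; rewrite eqxx.
  by apply: Tmin; rewrite x1 xN ne orbT.
- by move=> TN; case/orP: HT => [/eqP E|/and3P[]//]; nat_lia.
Qed.

Section AtFirstMismatch.
Variable T : nat.
Hypotheses (T_ge1 : 1 <= T) (T_leN : T <= N).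
Hypothesis colU_below : forall x, 1 <= x < T -> colU x = colW x.
Hypothesis colU_at : T < N -> colU T != colW T.

Lemma colW_neq_below x y : 1 <= x < y -> y <= N -> x < T -> colW x != colW y.
Proof.
move=> xy yN xT; apply: (exactly_two_eq13_neq12 (two_WWU xy yN)).
by apply/esym/colU_below; nat_lia.
Qed.

(* If [T = 1], i.e. U_1 and W_1 are split, the edges through A produce a monochromatic edge. *)
Lemma threshold_ge2 : 2 <= T.
Proof.
case: (ltngtP T 1) => // [|T1]; first by nat_lia.
have u1w1 : colU 1 != colW 1 by rewrite -T1; apply: colU_at; nat_lia.
have m1N : 1 < m < N by nat_lia.
have w1u1 : colW 1 != colU 1 by rewrite eq_sym.
case: (boolP (colW 1 == colW m)) => [/eqP w1wm|w1wm].
- have w1a := exactly_two_eq12_neq13 two_W1WmA w1wm.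
  have u1a := exactly_two_eq23 two_W1U1A w1u1 w1a.
  have uma := exactly_two_eq13_neq23 two_U1UmA u1a.
  have w1um := exactly_two_eq12 two_W1UmA w1a uma.
  by have := two_W1WU m1N; rewrite -w1wm -w1um exactly_twoE !eqxx.
- have two_W1WmU1 : exactly_two (colW 1) (colW m) (colU 1).
    by apply: two_WWU; [exact: m_ge2 | exact: ltnW].
  have wmu1 := exactly_two_eq23 two_W1WmU1 w1wm w1u1.
  have wma := exactly_two_eq12_neq13 two_WmU1A wmu1.
  have u1a := exactly_two_eq12_neq23 two_WmU1A wmu1.
  have w1a := exactly_two_eq13 two_W1WmA w1wm wma.
  have uma := exactly_two_eq13_neq23 two_W1UmA w1a.
  have u1um := exactly_two_eq12 two_U1UmA u1a uma.
  by have := two_WU1U m1N; rewrite -u1um -wmu1 exactly_twoE !eqxx.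
Qed.

Lemma threshold_mem : isn T.
Proof.
have T2 := threshold_ge2.
case: (ltngtP T N) => [TltN|NltT|->//]; last by nat_lia.
apply: contraT => nT.
have [x x1 Tx] : exists2 x, 1 <= x & T = x.+1 by exists T.-1; nat_lia.
rewrite Tx in TltN nT.
have wx_wS : colW x != colW x.+1 by apply: colW_neq_below; nat_lia.
have wS_uS : colW x.+1 != colU x.+1 by rewrite eq_sym -Tx; apply: colU_at; rewrite Tx.
have wx_uS := exactly_two_eq13 (two_WWUS x1 TltN nT) wx_wS wS_uS.
have xS_m : x.+1 != m by apply: contraNneq nT => ->.
have hx : (2 <= x) || (x.+1 < m) by nat_lia.
by have := two_WUUS x1 TltN hx; rewrite colU_below ?wx_uS ?exactly_twoE ?eqxx //; nat_lia.
Qed.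

Lemma colW_const_above y : T <= y <= N -> colW y = colW T.
Proof.
case/andP => Ty yN; case: (ltngtP T y) => [Tlty|yltT|->//]; last by nat_lia.
have T2 := threshold_ge2.
have TltN : T < N by nat_lia.
apply/eqP; rewrite eq_sym; apply/negPn/negP => wT_wy.
have uT_wT : colW T != colU T by rewrite eq_sym colU_at.
have two_WTWyUT : exactly_two (colW T) (colW y) (colU T) by apply: two_WWU; nat_lia.
have wy_uT := exactly_two_eq23 two_WTWyUT wT_wy uT_wT.
have w1_wT : colW 1 != colW T by apply: colW_neq_below; nat_lia.
have two_W1WTUT : exactly_two (colW 1) (colW T) (colU T) by apply: two_W1WU; nat_lia.
have w1_uT := exactly_two_eq13 two_W1WTUT w1_wT uT_wT.
have two_W1WyU1 : exactly_two (colW 1) (colW y) (colU 1) by apply: two_WWU => //; nat_lia.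
by move: two_W1WyU1; rewrite colU_below // wy_uT -w1_uT exactly_twoE !eqxx.
Qed.

Lemma colW_minn x : 1 <= x <= N -> colW x = colW (minn x T).
Proof.
by move=> /andP[x1 xN]; case: (leqP T x) => // Tx; rewrite colW_const_above ?Tx.
Qed.

Lemma colW_inj_upto x y : 1 <= x <= T -> 1 <= y <= T -> colW x = colW y -> x = y.
Proof.
wlog xy : x y / x <= y => [W hx hy|/andP[x1 _] /andP[_ yT] wxy].
  by case: (leqP x y) => [|/ltnW] le; [apply: W | move=> /esym/W-> //].
case: (ltngtP x y) => [xlty|//|//]; last by nat_lia.
have : colW x != colW y by apply: colW_neq_below; nat_lia.
by rewrite wxy eqxx.
Qed.

Lemma colU_threshold x : 1 <= x < N -> colU x = colW (if x < T then x else 1).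
Proof.
move=> /andP[x1 xN]; case: ifPn => [xT|]; first by apply: colU_below; nat_lia.
rewrite -leqNgt => Tx; have T2 := threshold_ge2.
have wx_wN : colW x = colW N by rewrite !colW_const_above //; nat_lia.
have wx_ux := exactly_two_eq12_neq13 (two_WWU (x:=x) (y:=N) _ _) wx_wN.
have w1_wx : colW 1 != colW x by apply: colW_neq_below; nat_lia.
apply/esym/(exactly_two_eq13 (two_W1WU (y:=x) _) w1_wx); rewrite ?wx_ux //; nat_lia.
Qed.

Lemma colA_threshold : colA = colW m.
Proof.
have T2 := threshold_ge2.
have w1_wm : colW 1 != colW m by apply: colW_neq_below; nat_lia.
have w1_a := exactly_two_eq12_neq13 two_W1U1A (esym (colU_below (x:=1) _)).
by apply/esym/(exactly_two_eq23 two_W1WmA w1_wm); rewrite w1_a //; nat_lia.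
Qed.

End AtFirstMismatch.

Lemma threshold_coloring : exists2 T, isn T & [/\ 2 <= T <= N,
  forall x, 1 <= x <= N -> colW x = colW (minn x T),
  forall x y, 1 <= x <= T -> 1 <= y <= T -> colW x = colW y -> x = y,
  forall x, 1 <= x < N -> colU x = colW (if x < T then x else 1) & colA = colW m].
Proof.
have [T [/andP[T1 TN] colU_below colU_at]] := first_mismatch.
exists T; first by apply: threshold_mem.
have T2 : 2 <= T by apply: (threshold_ge2 (T := T)).
split; rewrite ?T2 ?TN //.
- by move=> x; apply: (colW_minn (T := T)).
- by move=> x y; apply: (colW_inj_upto (T := T)).
- by move=> x; apply: (colU_threshold (T := T)).
- by apply: (colA_threshold (T := T)).
Qed.

End Threshold.

Section Construction.
Variables (s : nat) (ns : seq nat).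
Hypotheses (s_ge2 : 2 <= s) (size_ns : size ns = s).
Hypotheses (ns_sorted : sorted (fun a b => b < a) ns) (last_ge2 : 2 <= nth 0 ns s.-1).

(* [n j] is the paper's n_(j+1) *)
Local Notation n j := (nth 0 ns j).
Local Notation m := (n s.-1).
Local Notation N := (n 0).

Lemma nth_ns_ltn i j : i < j < s -> n j < n i.
Proof.
case/andP => ij js.
by apply: (sorted_ltn_nth (rev_trans ltn_trans) 0 ns_sorted); rewrite // inE size_ns ?js //; lia.
Qed.

Lemma nth_ns_leq i j : i <= j < s -> n j <= n i.
Proof.
case/andP; rewrite leq_eqVlt => /orP[/eqP-> //|ij] js.
by rewrite ltnW // nth_ns_ltn ?ij.
Qed.

Lemma nth_ns_bounds j : j < s -> m <= n j <= N.
Proof. by move=> js; rewrite !nth_ns_leq //; lia. Qed.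

Lemma last_lt_head : m < N.
Proof. by rewrite nth_ns_ltn //; lia. Qed.

Lemma nth_ns_mem j : j < s -> n j \in ns.
Proof. by move=> js; rewrite mem_nth ?size_ns. Qed.

Lemma mem_ns_nth c : c \in ns -> exists2 j, j < s & n j = c.
Proof. by move=> cns; exists (index c ns); rewrite ?nth_index // -size_ns index_mem. Qed.

Definition wvec x : seq nat := rcons [seq minn x c | c <- ns] 1.
Definition uvec x : seq nat := rcons [seq if x < c then x else 1 | c <- ns] 0.
Definition avec : seq nat := rcons (nseq s m) 0.

Lemma size_wvec x : size (wvec x) = s.+1.
Proof. by rewrite size_rcons size_map size_ns. Qed.
Lemma size_uvec x : size (uvec x) = s.+1.
Proof. by rewrite size_rcons size_map size_ns. Qed.

Lemma nth_wvec x j : j < s -> nth 0 (wvec x) j = minn x (n j).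
Proof. by move=> js; rewrite nth_rcons size_map size_ns js (nth_map 0) ?size_ns. Qed.
Lemma nth_uvec x j : j < s -> nth 0 (uvec x) j = if x < n j then x else 1.
Proof. by move=> js; rewrite nth_rcons size_map size_ns js (nth_map 0) ?size_ns. Qed.
Lemma nth_avec j : j < s -> nth 0 avec j = m.
Proof. by move=> js; rewrite nth_rcons size_nseq js nth_nseq js. Qed.

Lemma nth_wvec_last x : nth 0 (wvec x) s = 1.
Proof. by rewrite nth_rcons size_map size_ns ltnn eqxx. Qed.
Lemma nth_uvec_last x : nth 0 (uvec x) s = 0.
Proof. by rewrite nth_rcons size_map size_ns ltnn eqxx. Qed.
Lemma nth_avec_last : nth 0 avec s = 0.
Proof. by rewrite nth_rcons size_nseq ltnn eqxx. Qed.

Lemma eq_coords (l1 l2 : seq nat) : size l1 = s.+1 -> size l2 = s.+1 ->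
  (forall j, j < s -> nth 0 l1 j = nth 0 l2 j) -> nth 0 l1 s = nth 0 l2 s -> l1 = l2.
Proof.
move=> sz1 sz2 eq_init eq_last; apply: (@eq_from_nth _ 0); rewrite ?sz1 ?sz2 // => j.
by rewrite ltnS leq_eqVlt => /orP[/eqP->|/eq_init].
Qed.

Lemma Xtop_wvec : Xtop ns = wvec N.
Proof.
congr rcons; rewrite -[LHS]map_id; apply/eq_in_map => c /mem_ns_nth[j js <-].
by have := nth_ns_bounds js; lia.
Qed.

Lemma Xss_wvec x : x <= m -> rcons (nseq s x) 1 = wvec x.
Proof.
move=> xm; apply: eq_coords; rewrite ?size_wvec ?size_rcons ?size_nseq //.
  move=> j js; rewrite nth_wvec // nth_rcons size_nseq js nth_nseq js.
  by have := nth_ns_bounds js; lia.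
by rewrite nth_wvec_last nth_rcons size_nseq ltnn eqxx.
Qed.

Lemma Xss_uvec x : x < m -> rcons (nseq s x) 0 = uvec x.
Proof.
move=> xm; apply: eq_coords; rewrite ?size_uvec ?size_rcons ?size_nseq //.
  move=> j js; rewrite nth_uvec // nth_rcons size_nseq js nth_nseq js.
  by have := nth_ns_bounds js; case: ifP; lia.
by rewrite nth_uvec_last nth_rcons size_nseq ltnn eqxx.
Qed.

Lemma Xi_uvec_wvec i k (x := n i.-1 + k) : 2 <= i <= s -> k < n i.-2 - n i.-1 ->
  nseq i.-1 x ++ nseq (s - i + 1) 1 ++ [:: 0] = uvec x /\
  nseq i.-1 x ++ drop i.-1 ns ++ [:: 1] = wvec x.
Proof.
move=> /andP[i2 iS] hk.
have above j : j < i.-1 -> x < n j.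
  by move=> ji; have := nth_ns_leq (i := j) (j := i.-2); lia.
have below j : i.-1 <= j < s -> n j <= x by move=> ij; have := nth_ns_leq ij; lia.
split; apply: eq_coords;
  rewrite ?size_uvec ?size_wvec ?size_cat ?size_nseq ?size_drop ?size_ns //=; try lia;
  try move=> j js.
- rewrite nth_uvec // nth_cat size_nseq nth_nseq.
  case: ltnP => ji; first by rewrite above.
  have := below j; rewrite nth_cat size_nseq nth_nseq.
  by repeat case: ifP; move=> *; lia.
- rewrite nth_uvec_last nth_cat size_nseq ifF; last by lia.
  have -> : s - i.-1 = s - i + 1 by lia.
  by rewrite nth_cat size_nseq ltnn subnn.
- rewrite nth_wvec // nth_cat size_nseq nth_nseq.
  case: ltnP => ji; first by have := above j ji; lia.
  rewrite nth_cat size_drop size_ns ifT; last by lia.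
  by rewrite nth_drop subnKC //; have := below j; lia.
- rewrite nth_wvec_last nth_cat size_nseq ifF; last by lia.
  by rewrite nth_cat size_drop size_ns ltnn subnn.
Qed.

Lemma block_decomposition x : m <= x < N ->
  exists i k, [/\ 2 <= i <= s, k < n i.-2 - n i.-1 & x = n i.-1 + k].
Proof.
move=> /andP[mx xN]; set p := find (fun c => c <= x) ns.
have has_le : has (fun c => c <= x) ns by apply/hasP; exists m; rewrite ?nth_ns_mem //; lia.
have ps : p < s by rewrite -size_ns -has_find.
have np_le : n p <= x by have := nth_find 0 has_le.
have p_gt0 : 0 < p by case: (posnP p) np_le => // ->; lia.
have lt_prev : x < n p.-1 by rewrite ltnNge (before_find 0 (_ : p.-1 < p)) //; lia.
by exists p.+1, (x - n p); split; rewrite /=; lia.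
Qed.

Lemma mem_Xset l : (l \in Xset s ns) =
  [|| l == Xtop ns, l \in Xss s ns | l \in flatten [seq Xi s ns i | i <- iota 2 s.-1]].
Proof. by rewrite /Xset mem_undup in_cons mem_cat. Qed.

Lemma Xi_mem i k : 2 <= i <= s -> k < n i.-2 - n i.-1 ->
  (uvec (n i.-1 + k) \in Xset s ns) && (wvec (n i.-1 + k) \in Xset s ns).
Proof.
move=> hi hk; have [<- <-] := Xi_uvec_wvec hi hk.
have i_in : i \in iota 2 s.-1 by rewrite mem_iota; lia.
have k_in : k \in iota 0 (nth_n ns i.-1 - nth_n ns i) by rewrite mem_iota.
by rewrite !mem_Xset; apply/andP; split; apply/or3P/Or33/flatten_mapP; exists i => //;
  apply/flatten_mapP; exists k; rewrite // !inE eqxx ?orbT.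
Qed.

Lemma Xss_mem x : 1 <= x <= m ->
  rcons (nseq s x) 0 \in Xset s ns /\ rcons (nseq s x) 1 \in Xset s ns.
Proof.
move=> hx; rewrite !mem_Xset; split; apply/or3P/Or32/flatten_mapP; exists x;
  rewrite ?mem_iota /nth_n ?inE ?eqxx ?orbT //; lia.
Qed.

Lemma wvec_mem x : 1 <= x <= N -> wvec x \in Xset s ns.
Proof.
move=> /andP[x1 xN]; case: (leqP x m) => xm.
  by rewrite -Xss_wvec //; case: (Xss_mem (x := x) _) => //; rewrite x1.
case: (ltngtP x N) => [xltN|Nltx|->]; [|by lia|by rewrite mem_Xset -Xtop_wvec eqxx].
have /block_decomposition[i [k [hi hk ->]]] : m <= x < N by rewrite ltnW.
by case/andP: (Xi_mem hi hk).
Qed.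

Lemma uvec_mem x : 1 <= x < N -> uvec x \in Xset s ns.
Proof.
move=> /andP[x1 xN]; case: (ltnP x m) => xm.
  by rewrite -Xss_uvec //; case: (Xss_mem (x := x) _) => //; rewrite x1 ltnW.
have /block_decomposition[i [k [hi hk ->]]] : m <= x < N by rewrite xm.
by case/andP: (Xi_mem hi hk).
Qed.

Lemma avec_mem : avec \in Xset s ns.
Proof. by case: (Xss_mem (x := m) _) => //; rewrite leqnn; lia. Qed.

Lemma XsetP l : l \in Xset s ns ->
  [\/ exists2 x, 1 <= x <= N & l = wvec x, exists2 x, 1 <= x < N & l = uvec x | l = avec].
Proof.
have mN := last_lt_head.
rewrite mem_Xset => /or3P[/eqP->|/flatten_mapP[x]|/flatten_mapP[i]].
- by apply: Or31; exists N; rewrite ?Xtop_wvec //; lia.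
- rewrite mem_iota /nth_n => hx; rewrite !inE => /orP[]/eqP->; last first.
    by apply: Or31; exists x; rewrite ?Xss_wvec //; lia.
  case: (ltngtP x m) => [xm|mx|->]; [|by lia|exact: Or33].
  by apply: Or32; exists x; rewrite ?Xss_uvec //; lia.
- rewrite mem_iota => hi /flatten_mapP[k]; rewrite mem_iota /nth_n => hk.
  have hi' : 2 <= i <= s by lia.
  have hk' : k < n i.-2 - n i.-1 by lia.
  have [-> ->] := Xi_uvec_wvec hi' hk'.
  have b1 : m <= n i.-1 <= N by apply: nth_ns_bounds; lia.
  have b2 : m <= n i.-2 <= N by apply: nth_ns_bounds; lia.
  by rewrite !inE => /orP[]/eqP->; [apply: Or32 | apply: Or31]; exists (n i.-1 + k) => //; lia.
Qed.

Local Notation V := (vtx s ns).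

Definition Av : V := SeqSub avec_mem.
Definition Wv x : V := insubd Av (wvec x).
Definition Uv x : V := insubd Av (uvec x).

Lemma val_Wv x : 1 <= x <= N -> val (Wv x) = wvec x.
Proof. by move=> hx; rewrite insubdK //; apply: wvec_mem. Qed.
Lemma val_Uv x : 1 <= x < N -> val (Uv x) = uvec x.
Proof. by move=> hx; rewrite insubdK //; apply: uvec_mem. Qed.

Lemma vertexP (v : V) :
  [\/ exists2 x, 1 <= x <= N & v = Wv x, exists2 x, 1 <= x < N & v = Uv x | v = Av].
Proof.
case: (XsetP (ssvalP v)) => [[x hx e]|[x hx e]|e].
- by apply: Or31; exists x => //; apply: val_inj; rewrite val_Wv.
- by apply: Or32; exists x => //; apply: val_inj; rewrite val_Uv.
- by apply: Or33; apply: val_inj.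
Qed.

Definition coord j (v : V) : nat := nth 0 (val v) j.

Lemma coord_Wv x j : 1 <= x <= N -> j < s -> coord j (Wv x) = minn x (n j).
Proof. by move=> hx js; rewrite /coord val_Wv // nth_wvec. Qed.
Lemma coord_Uv x j : 1 <= x < N -> j < s -> coord j (Uv x) = if x < n j then x else 1.
Proof. by move=> hx js; rewrite /coord val_Uv // nth_uvec. Qed.
Lemma coord_Av j : j < s -> coord j Av = m.
Proof. exact: nth_avec. Qed.
Lemma coord_Wv_last x : 1 <= x <= N -> coord s (Wv x) = 1.
Proof. by move=> hx; rewrite /coord val_Wv // nth_wvec_last. Qed.
Lemma coord_Uv_last x : 1 <= x < N -> coord s (Uv x) = 0.
Proof. by move=> hx; rewrite /coord val_Uv // nth_uvec_last. Qed.
Lemma coord_Av_last : coord s Av = 0.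
Proof. exact: nth_avec_last. Qed.

Lemma neq_coord j (a b : V) : coord j a != coord j b -> a != b.
Proof. by apply: contraNneq => ->. Qed.

Lemma triple_in_Bedges (a b d : V) : a != b -> b != d -> a != d ->
  (forall j, j < s.+1 -> exactly_two (coord j a) (coord j b) (coord j d)) ->
  [set a; b; d] \in Bedges s ns.
Proof.
move=> ab bd ad two_coords; rewrite inE; apply/orP; left; apply/andP; split.
  by rewrite cardE (perm_size (enum_set3 ab bd ad)).
apply/forallP => j.
have := perm_map (fun v : V => nth 0 (val v) j) (enum_set3 ab bd ad).
by move/perm_mem/perm_undup/perm_size->; apply: two_coords.
Qed.

Definition tri_edge (a b d : V) : Prop :=
  [/\ a != b, b != d, a != d & [set a; b; d] \in Bedges s ns].

Lemma tri_coords_lia (a b d : V) ja jb jd :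
  coord ja a != coord ja b -> coord jb b != coord jb d -> coord jd a != coord jd d ->
  (forall j, j < s -> exactly_two (coord j a) (coord j b) (coord j d)) ->
  exactly_two (coord s a) (coord s b) (coord s d) -> tri_edge a b d.
Proof.
move=> /neq_coord ab /neq_coord bd /neq_coord ad two_init two_last.
split=> //; apply: triple_in_Bedges => // j; rewrite ltnS leq_eqVlt.
by case/orP => [/eqP->|/two_init].
Qed.

(* The [_last] rules go first: [coord_Wv] also matches [coord s _], with side goal [s < s]. *)
Ltac coords_lia := rewrite ?coord_Wv_last ?coord_Uv_last ?coord_Av_last
  ?coord_Wv ?coord_Uv ?coord_Av; try (have := last_lt_head);
  try match goal with js : is_true (?j < s) |- _ => have := nth_ns_bounds js end;
  rewrite ?exactly_twoE; repeat case: ifP; move=> *; lia.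

Lemma tri_edge_WWU x y : 1 <= x < y -> y <= N -> tri_edge (Wv x) (Wv y) (Uv x).
Proof.
by move=> xy yN; apply: (tri_coords_lia (ja := 0) (jb := s) (jd := s)) => [|||j js|];
  coords_lia.
Qed.

Lemma tri_edge_W1WU y : 1 < y < N -> tri_edge (Wv 1) (Wv y) (Uv y).
Proof.
by move=> hy; apply: (tri_coords_lia (ja := 0) (jb := s) (jd := s)) => [|||j js|];
  coords_lia.
Qed.

Lemma tri_edge_WWUS x : 1 <= x -> x.+1 < N -> x.+1 \notin ns ->
  tri_edge (Wv x) (Wv x.+1) (Uv x.+1).
Proof.
move=> x1 xN xS_ns; apply: (tri_coords_lia (ja := 0) (jb := s) (jd := s)) => [|||j js|];
  try by coords_lia.
have : n j != x.+1 by apply: contraNneq xS_ns => <-; apply: nth_ns_mem.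
by coords_lia.
Qed.

Lemma tri_edge_WUUS x : 1 <= x -> x.+1 < N -> (2 <= x) || (x.+1 < m) ->
  tri_edge (Wv x) (Uv x) (Uv x.+1).
Proof.
by move=> x1 xN hx; apply: (tri_coords_lia (ja := s) (jb := 0) (jd := s)) => [|||j js|];
  coords_lia.
Qed.

Lemma tri_edge_WU1U z : 1 < z < N -> tri_edge (Wv z) (Uv 1) (Uv z).
Proof.
by move=> hz; apply: (tri_coords_lia (ja := s) (jb := 0) (jd := s)) => [|||j js|];
  coords_lia.
Qed.

Lemma tri_edge_W1WmA : tri_edge (Wv 1) (Wv m) Av.
Proof.
by apply: (tri_coords_lia (ja := 0) (jb := s) (jd := s)) => [|||j js|]; coords_lia.
Qed.

Lemma tri_edge_W1U1A : tri_edge (Wv 1) (Uv 1) Av.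
Proof.
by apply: (tri_coords_lia (ja := s) (jb := 0) (jd := s)) => [|||j js|]; coords_lia.
Qed.

Lemma tri_edge_WmU1A : tri_edge (Wv m) (Uv 1) Av.
Proof.
by apply: (tri_coords_lia (ja := s) (jb := 0) (jd := s)) => [|||j js|]; coords_lia.
Qed.

Lemma tri_edge_W1UmA : tri_edge (Wv 1) (Uv m) Av.
Proof.
by apply: (tri_coords_lia (ja := s) (jb := s.-1) (jd := s)) => [|||j js|]; coords_lia.
Qed.

Lemma extra_triple_vecs : extra_triple s ns = [:: uvec 1; uvec m; avec].
Proof.
have mN := last_lt_head.
rewrite /extra_triple /nth_n Xss_uvec; last by lia.
congr [:: _; _; _]; apply: eq_coords; rewrite ?size_uvec ?size_cat ?size_nseq //=; try lia.
  move=> j js; rewrite nth_uvec // nth_cat size_nseq nth_nseq.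
  case: ltnP => jm; last by rewrite (_ : j = s.-1) ?subnn ?ltnn //; lia.
  by have := nth_ns_ltn (i := j) (j := s.-1); case: ifP; lia.
rewrite nth_uvec_last nth_cat size_nseq ifF; last by lia.
by rewrite (_ : s - s.-1 = 1) //; lia.
Qed.

Lemma extra_triple_set : [set v : V | val v \in extra_triple s ns] = [set Uv 1; Uv m; Av].
Proof.
have mN := last_lt_head.
apply/setP => v; rewrite inE extra_triple_vecs !inE -!val_eqE /= val_Uv ?val_Uv //; lia.
Qed.

Lemma tri_edge_U1UmA : tri_edge (Uv 1) (Uv m) Av.
Proof.
split; last by rewrite inE extra_triple_set eqxx orbT.
- by apply: (neq_coord (j := 0)); coords_lia.
- by apply: (neq_coord (j := s.-1)); coords_lia.
- by apply: (neq_coord (j := 0)); coords_lia.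
Qed.

Definition coord_partition q : {set {set V}} := preim_partition (coord q) [set: V].

Lemma coord_bounds q v : q < s -> 1 <= coord q v <= n q.
Proof.
move=> qs; have := nth_ns_bounds qs; have := last_lt_head.
by case: (vertexP v) => [[x hx ->]|[x hx ->]|->]; coords_lia.
Qed.

Lemma coord_Wv_id q x : q < s -> 1 <= x <= n q -> coord q (Wv x) = x.
Proof. by move=> qs hx; have := nth_ns_bounds qs; coords_lia. Qed.

Lemma card_coord_partition q : q < s -> #|coord_partition q| = n q.
Proof.
move=> qs; apply: (card_preim_partition (g := fun i : 'I_(n q) => Wv i.+1)).
  by move=> i j /=; rewrite !coord_Wv_id ?ltn_ord // => -[] /val_inj.
move=> v; have hv := coord_bounds v qs.
have lt_nq : (coord q v).-1 < n q by lia.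
by exists (Ordinal lt_nq); rewrite /= coord_Wv_id //; lia.
Qed.

Lemma coord_ok_same q (E : {set V}) : q < s.+1 -> #|E| = 3 -> coord_ok E ->
  [exists x in E, exists y in E, (x != y) && (coord q x == coord q y)].
Proof.
move=> qs card3 /forallP/(_ (Ordinal qs)) /=; apply: contraTT => no_same.
have inj : {in enum E &, injective (coord q)}.
  move=> x y; rewrite !mem_enum => xE yE cxy; apply/eqP; apply: contraNT no_same => xy.
  by apply/existsP; exists x; rewrite xE /=; apply/existsP; exists y; rewrite yE xy cxy eqxx.
rewrite undup_id; last by rewrite (map_inj_in_uniq inj) enum_uniq.
by rewrite size_map -cardE card3.
Qed.

Lemma coord_ok_diff q (E : {set V}) : q < s.+1 -> coord_ok E ->
  [exists x in E, exists y in E, coord q x != coord q y].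
Proof.
move=> qs /forallP/(_ (Ordinal qs)) /=; apply: contraTT => no_diff.
case: (set_0Vmem E) => [->|[x0 x0E]]; first by rewrite enum_set0.
have sub : {subset undup [seq coord q v | v <- enum E] <= [:: coord q x0]}.
  move=> c; rewrite mem_undup => /mapP[y]; rewrite mem_enum => yE ->.
  rewrite inE; apply: contraNT no_diff => ne; apply/existsP; exists x0; rewrite x0E /=.
  by apply/existsP; exists y; rewrite yE eq_sym.
by have := uniq_leq_size (undup_uniq _) sub; case: (size _) => [|[|]].
Qed.

Lemma coord_partition_strict q : q < s ->
  strict_coloring (Bedges s ns) (Bedges s ns) (coord_partition q).
Proof.
move=> qs; have := nth_ns_bounds qs; have := last_lt_head => mN bounds.
have [U1_Um Um_A U1_A _] := tri_edge_U1UmA.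
apply/and3P; split; first exact: preim_partitionP.
- apply/forall_inP => E; rewrite inE => /orP[/andP[/eqP card3 ok]|/eqP->].
    have /existsP[x /andP[xE /existsP[y /andP[yE /andP[xy cxy]]]]] :=
      coord_ok_same (ltnW qs) card3 ok.
    by apply/existsP; exists x; rewrite xE; apply/existsP; exists y; rewrite yE xy pblock_preim.
  rewrite extra_triple_set; case: (ltnP m (n q)) => mq.
    apply/existsP; exists (Uv m); rewrite !inE eqxx orbT /=.
    by apply/existsP; exists Av; rewrite !inE eqxx orbT Um_A pblock_preim; coords_lia.
  apply/existsP; exists (Uv 1); rewrite !inE eqxx /=.
  by apply/existsP; exists (Uv m); rewrite !inE eqxx orbT U1_Um pblock_preim; coords_lia.
- apply/forall_inP => E; rewrite inE => /orP[/andP[_ ok]|/eqP->].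
    have /existsP[x /andP[xE /existsP[y /andP[yE cxy]]]] := coord_ok_diff (ltnW qs) ok.
    by apply/existsP; exists x; rewrite xE; apply/existsP; exists y; rewrite yE pblock_preim.
  rewrite extra_triple_set; apply/existsP; exists (Uv 1); rewrite !inE eqxx /=.
  by apply/existsP; exists Av; rewrite !inE eqxx orbT pblock_preim; coords_lia.
Qed.

Lemma strict_coloring_coord P : strict_coloring (Bedges s ns) (Bedges s ns) P ->
  exists2 q, q < s & P = coord_partition q.
Proof.
move=> strictP; have mN := last_lt_head.
have N_ns : N \in ns by apply: nth_ns_mem; lia.
have m_ns : m \in ns by apply: nth_ns_mem; lia.
have two a b d : tri_edge a b d -> exactly_two (pblock P a) (pblock P b) (pblock P d).
  by move=> [ab bd ad abd_B]; apply: (strict_coloring_triple strictP ab bd ad abd_B abd_B).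
have [T T_ns [_ colW_minn colW_inj colU_T colA_m]] := threshold_coloring
  (colW := fun x => pblock P (Wv x)) (colU := fun x => pblock P (Uv x)) (colA := pblock P Av)
  (isn := fun x => x \in ns) last_ge2 mN N_ns m_ns
  (fun x y hxy hy => two _ _ _ (tri_edge_WWU hxy hy))
  (fun y hy => two _ _ _ (tri_edge_W1WU hy))
  (fun x h1 h2 h3 => two _ _ _ (tri_edge_WWUS h1 h2 h3))
  (fun x h1 h2 h3 => two _ _ _ (tri_edge_WUUS h1 h2 h3))
  (fun z hz => two _ _ _ (tri_edge_WU1U hz))
  (two _ _ _ tri_edge_W1WmA) (two _ _ _ tri_edge_W1U1A) (two _ _ _ tri_edge_WmU1A)
  (two _ _ _ tri_edge_W1UmA) (two _ _ _ tri_edge_U1UmA).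
have [q qs nq_T] := mem_ns_nth T_ns; exists q => //.
have block_coord v : pblock P v = pblock P (Wv (coord q v)).
  have := nth_ns_bounds qs.
  case: (vertexP v) => [[x hx ->]|[x hx ->]|->] bounds.
  - by rewrite colW_minn // coord_Wv // nq_T.
  - by rewrite colU_T // coord_Uv // nq_T.
  - by rewrite colA_m coord_Av.
have /and3P[partP _ _] := strictP.
apply: preim_partition_unique => // v w.
have := coord_bounds v qs; have := coord_bounds w qs; rewrite nq_T => bw bv.
rewrite block_coord [pblock P w]block_coord.
by apply/eqP/eqP => [/colW_inj|->] //; apply.
Qed.

Lemma feasible_Bedges k : feasible (Bedges s ns) (Bedges s ns) k <-> k \in ns.
Proof.
split => [[P [strictP <-]]|/mem_ns_nth[q qs <-]].
  by have [q qs ->] := strict_coloring_coord strictP; rewrite card_coord_partition ?nth_ns_mem.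
by exists (coord_partition q); rewrite coord_partition_strict ?card_coord_partition.
Qed.

Lemma n_colorings_Bedges_le1 k : n_colorings (Bedges s ns) (Bedges s ns) k <= 1.
Proof.
apply/card_le1_eqP => P1 P2; rewrite !inE => /andP[strict1 /eqP <-] /andP[strict2].
have [q1 q1s ->] := strict_coloring_coord strict1.
have [q2 q2s ->] := strict_coloring_coord strict2.
have ns_uniq : uniq ns := sorted_uniq (rev_trans ltn_trans) ltnn ns_sorted.
by rewrite !card_coord_partition // nth_uniq ?size_ns // => /eqP->.
Qed.

End Construction.

Theorem theorem2p4 (s : nat) (ns : seq nat) :
  2 <= s ->
  size ns = s ->
  sorted (fun a b => b < a) ns ->
  2 <= nth 0 ns s.-1 ->
  one_realization (Bedges s ns) (Bedges s ns) ns.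
Proof.
move=> s_ge2 size_ns ns_sorted last_ge2; split => k.
  exact: feasible_Bedges.
exact: n_colorings_Bedges_le1.
Qed.
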